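(* If $\mathrm{char}(\Bbbk)=2$, then $P$ is minimally generated by $g_1=z^2+x^2y+y^5z^3$ and $g_2=y^3+x^4+y^3z^5+x^2y^4z^3$; in particular $\mu(P)=2$.
   Context: $\Bbbk$ is a field. $\rho:\Bbbk[[x,y,z]]\to\Bbbk[[t]]$ is the $\Bbbk$-algebra morphism with $\rho(x)=t^6+t^{31}$, $\rho(y)=t^8$, $\rho(z)=t^{10}$, and $P=\ker\rho$. $\mu(P)$ is the minimal number of generators of $P$. *)

From HB Require Import structures.
From mathcomp Require Import all_boot all_algebra.
Set Implicit Arguments. Unset Strict Implicit. Unset Printing Implicit Defensive.
Import GRing.Theory.
Local Open Scope ring_scope.

(* Formal power series k[[x,y,z]]: a series is its coefficient function,
   f a b c = coefficient of x^a y^b z^c. *)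
Definition ps3 (k : fieldType) := nat -> nat -> nat -> k.

Definition ps3_zero (k : fieldType) : ps3 k := fun _ _ _ => 0.
Definition ps3_add (k : fieldType) (f g : ps3 k) : ps3 k :=
  fun a b c => f a b c + g a b c.
Definition ps3_mul (k : fieldType) (f g : ps3 k) : ps3 k :=
  fun a b c => \sum_(i < a.+1) \sum_(j < b.+1) \sum_(l < c.+1)
                 f i j l * g (a - i)%N (b - j)%N (c - l)%N.
Definition ps3_mono (k : fieldType) (a b c : nat) : ps3 k :=
  fun i j l => if [&& i == a, j == b & l == c] then 1 else 0.

(* Images of x, y, z in k[[t]] (they are polynomials in t). *)
Definition rho_x (k : fieldType) : {poly k} := 'X^6 + 'X^31.
Definition rho_y (k : fieldType) : {poly k} := 'X^8.
Definition rho_z (k : fieldType) : {poly k} := 'X^10.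

(* Since rho(x),rho(y),rho(z) have order >= 1,
   only a,b,c <= n contribute to the coefficient of t^n. *)
Definition rho (k : fieldType) (f : ps3 k) : nat -> k :=
  fun n => \sum_(a < n.+1) \sum_(b < n.+1) \sum_(c < n.+1)
             f a b c * (rho_x k ^+ a * rho_y k ^+ b * rho_z k ^+ c)`_n.

(* P = ker rho *)
Definition kerP (k : fieldType) (f : ps3 k) : Prop := forall n, rho f n = 0.

Definition in_ideal (k : fieldType) (gs : seq (ps3 k)) (f : ps3 k) : Prop :=
  exists h : nat -> ps3 k, forall a b c,
    f a b c = \sum_(i < size gs) ps3_mul (h i) (nth (ps3_zero k) gs i) a b c.

Definition generates (k : fieldType) (gs : seq (ps3 k)) (I : ps3 k -> Prop) :=
  forall f, I f <-> in_ideal gs f.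

Definition min_num_gens (k : fieldType) (I : ps3 k -> Prop) (n : nat) : Prop :=
  (exists gs : seq (ps3 k), size gs = n /\ generates gs I) /\
  (forall gs : seq (ps3 k), generates gs I -> (n <= size gs)%N).

Definition g1 (k : fieldType) : ps3 k :=
  ps3_add (ps3_add (ps3_mono k 0 0 2) (ps3_mono k 2 1 0)) (ps3_mono k 0 5 3).
Definition g2 (k : fieldType) : ps3 k :=
  ps3_add (ps3_add (ps3_add (ps3_mono k 0 3 0) (ps3_mono k 4 0 0))
                   (ps3_mono k 0 3 5)) (ps3_mono k 2 4 3).

From HB Require Import structures.
From mathcomp Require Import all_boot all_algebra.
From mathcomp Require Import ring zify.
Set Implicit Arguments. Unset Strict Implicit. Unset Printing Implicit Defensive.
Import GRing.Theory.
Local Open Scope ring_scope.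

(* rho(g1) and rho(g2) are 2 times polynomials in t, so g1, g2 lie in P when
   char k = 2.  Conversely, dividing by the leading forms z^2 of g1 and y^3 of g2
   (their other terms have higher order, so the division converges) writes
   f = q1 g1 + q2 g2 + r with r = sum_(b<3, c<2) r_bc(x) y^b z^c.  Rewriting r
   along the basis 1, y, z, y^2 + xz, yz + x^3, y^2 z + x^3 y, whose images are
   units times t^0, t^8, t^10, t^41, t^43, t^51 with exponents distinct modulo 6,
   and using rho(x) = t^6 (1 + t^25), the lowest term of rho(r) cannot cancel;
   hence f in P forces r = 0.  One generator does not suffice: it would have no
   constant, y or z term, and comparing low coefficients of g1 = h f and
   g2 = h' f then fails. *)

Lemma big_ord_cut (R : nmodType) (F : nat -> R) m n :
  (forall i, (m <= i)%N -> F i = 0) -> (m <= n)%N ->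
  \sum_(i < n) F i = \sum_(i < m) F i.
Proof.
move=> hF hmn; rewrite (big_ord_widen _ _ hmn) [RHS]big_mkcond.
by apply: eq_bigr => i _; case: ltnP => // /hF.
Qed.

Lemma big_ord_cut_eq (R : nmodType) (F : nat -> R) m n1 n2 :
  (forall i, (m <= i)%N -> F i = 0) -> (m <= n1)%N -> (m <= n2)%N ->
  \sum_(i < n1) F i = \sum_(i < n2) F i.
Proof. by move=> hF h1 h2; rewrite !(big_ord_cut hF). Qed.

Lemma big_ord_only (R : nmodType) n (F : 'I_n -> R) (i0 : 'I_n) :
  (forall i, i != i0 -> F i = 0) -> \sum_(i < n) F i = F i0.
Proof. by move=> hF; rewrite (bigD1 i0) //= big1 ?addr0. Qed.

Section PowerSeries.
Variable k : fieldType.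
Implicit Types f g h : ps3 k.

Lemma ps3_mulDr f g h a b c :
  ps3_mul f (ps3_add g h) a b c = ps3_mul f g a b c + ps3_mul f h a b c.
Proof.
rewrite /ps3_mul -!big_split; apply: eq_bigr => i _.
rewrite -!big_split; apply: eq_bigr => j _.
by rewrite -!big_split; apply: eq_bigr => l _; rewrite mulrDr.
Qed.

Lemma ps3_mul_suml (F : nat -> ps3 k) n g a b c :
  ps3_mul (fun i j l => \sum_(m < n) F m i j l) g a b c =
  \sum_(m < n) ps3_mul (F m) g a b c.
Proof.
rewrite /ps3_mul; symmetry; rewrite exchange_big; apply: eq_bigr => i _.
rewrite exchange_big; apply: eq_bigr => j _.
by rewrite exchange_big; apply: eq_bigr => l _; rewrite mulr_suml.
Qed.

Lemma eq_ps3_mul_low f f' g a b c :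
  (forall i j l, (i <= a)%N -> (j <= b)%N -> (l <= c)%N -> f i j l = f' i j l) ->
  ps3_mul f g a b c = ps3_mul f' g a b c.
Proof.
move=> h; apply: eq_bigr => i _; apply: eq_bigr => j _; apply: eq_bigr => l _.
by rewrite h // -ltnS ltn_ord.
Qed.

Lemma ps3_mul_monor f a0 b0 c0 a b c :
  ps3_mul f (ps3_mono k a0 b0 c0) a b c =
  if [&& (a0 <= a)%N, (b0 <= b)%N & (c0 <= c)%N]
  then f (a - a0)%N (b - b0)%N (c - c0)%N else 0.
Proof.
rewrite /ps3_mul /ps3_mono; under eq_bigr do rewrite pair_bigA; rewrite pair_bigA /=.
have hit (i j l : nat) : (i < a.+1)%N -> (j < b.+1)%N -> (l < c.+1)%N ->
    [&& (a - i == a0)%N, (b - j == b0)%N & (c - l == c0)%N] =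
    [&& [&& (a0 <= a)%N, (b0 <= b)%N & (c0 <= c)%N],
        i == (a - a0)%N, j == (b - b0)%N & l == (c - c0)%N].
  move=> hi hj hl; apply/idP/idP => [/and3P [/eqP ? /eqP ? /eqP ?]|].
    by apply/and4P; split; [apply/and3P; split|..]; apply/eqP; lia.
  by case/and4P => /and3P [? ? ?] /eqP ? /eqP ? /eqP ?; apply/and3P; split; apply/eqP; lia.
case: ifP => habc; last first.
  apply: big1 => -[i [j l]] _ /=.
  by rewrite hit // habc mulr0.
have [ha hb hc] : [/\ (a - a0 < a.+1)%N, (b - b0 < b.+1)%N & (c - c0 < c.+1)%N].
  by split; lia.
rewrite (bigD1 (Ordinal ha, (Ordinal hb, Ordinal hc))) //= big1 ?addr0.
  by rewrite hit ?habc ?eqxx ?mulr1 //; lia.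
move=> -[i [j l]] /= hne; rewrite hit // habc /=.
case: eqP => [ei|]; case: eqP => [ej|]; case: eqP => [el|] //=; rewrite ?mulr0 //.
by case/negP: hne; rewrite !xpair_eqE -!val_eqE /= ei ej el !eqxx.
Qed.

Lemma ps3_mul_mono0l f a b c : ps3_mul (ps3_mono k 0 0 0) f a b c = f a b c.
Proof.
have only0 n (F : 'I_n.+1 -> k) :
    (forall i : 'I_n.+1, (i : nat) != 0%N -> F i = 0) -> \sum_(i < n.+1) F i = F ord0.
  by move=> hF; apply: big_ord_only => i; rewrite -val_eqE; apply: hF.
rewrite /ps3_mul /ps3_mono only0 => [|i /negbTE hi]; last first.
  by rewrite big1 // => j _; rewrite big1 // => l _; rewrite hi mul0r.
rewrite only0 => [|j /negbTE hj]; last by rewrite big1 // => l _; rewrite hj andbF mul0r.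
by rewrite only0 => [|l /negbTE hl]; rewrite ?hl ?andbF ?mul0r // mul1r !subn0.
Qed.

Definition ps3_ord_ge d f := forall a b c, (a + b + c < d)%N -> f a b c = 0.

Lemma ps3_ord_geW d d' f : (d' <= d)%N -> ps3_ord_ge d f -> ps3_ord_ge d' f.
Proof. by move=> h hf a b c hh; apply: hf; lia. Qed.

Lemma ps3_ord_ge_add d f g :
  ps3_ord_ge d f -> ps3_ord_ge d g -> ps3_ord_ge d (ps3_add f g).
Proof. by move=> hf hg a b c h; rewrite /ps3_add hf ?hg ?addr0. Qed.

Lemma ps3_ord_ge_mul d1 d2 f g :
  ps3_ord_ge d1 f -> ps3_ord_ge d2 g -> ps3_ord_ge (d1 + d2) (ps3_mul f g).
Proof.
move=> hf hg a b c habc; apply: big1 => i _; apply: big1 => j _; apply: big1 => l _.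
have := ltn_ord i; have := ltn_ord j; have := ltn_ord l => hl hj hi.
case: (ltnP (i + j + l) d1) => h1; first by rewrite hf // mul0r.
by rewrite hg ?mulr0 //; lia.
Qed.

Lemma ps3_ord_ge_mono a0 b0 c0 : ps3_ord_ge (a0 + b0 + c0) (ps3_mono k a0 b0 c0).
Proof.
move=> a b c h; rewrite /ps3_mono.
by case: (a =P a0); case: (b =P b0); case: (c =P c0) => //=; lia.
Qed.

End PowerSeries.

Lemma coef_mul_exp_lt (R : comNzRingType) (q u : {poly R}) i n :
  u`_0 = 0 -> (n < i)%N -> (q * u ^+ i)`_n = 0.
Proof.
move=> hu hn.
have -> : u = drop_poly 1 u * 'X.
  have ht : take_poly 1 u = 0 by apply/polyP => -[|j]; rewrite coef_take_poly coef0.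
  by rewrite -{1}(poly_take_drop 1 u) ht add0r.
by rewrite exprMn mulrA coefMXn ifT.
Qed.

Lemma coef_mul_horner_morph (R : nzRingType) (S : comNzRingType)
    (f : {rmorphism R -> {poly S}}) (u : {poly S}) (cf : commr_rmorph f u)
    (p : {poly R}) (q : {poly S}) n :
  u`_0 = 0 -> (q * horner_morph cf p)`_n = \sum_(i < n.+1) (q * u ^+ i * f p`_i)`_n.
Proof.
move=> hu; pose M := maxn (size p) n.+1.
rewrite /horner_morph (@horner_coef_wide _ M); last first.
  exact: leq_trans (size_poly _ _) (leq_maxl _ _).
rewrite mulr_sumr coef_sum.
rewrite (@big_ord_cut _ (fun i => (q * ((map_poly f p)`_i * u ^+ i))`_n) n.+1) ?leq_maxr //.
- by apply: eq_bigr => i _; rewrite coef_map mulrA mulrAC.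
- by move=> i hi; rewrite mulrA coef_mul_exp_lt.
Qed.

Section Evaluation.
Variable k : fieldType.
Implicit Types (f g h : ps3 k) (P : {poly {poly {poly k}}}).

Definition rho_mono a b c : {poly k} := rho_x k ^+ a * rho_y k ^+ b * rho_z k ^+ c.

Lemma rho_x_eq : rho_x k = (1 + 'X^25) * 'X^6.
Proof. by rewrite /rho_x; ring. Qed.

Lemma rho_mono_eq a b c :
  rho_mono a b c = (1 + 'X^25) ^+ a * 'X^(6 * a + 8 * b + 10 * c).
Proof. by rewrite /rho_mono rho_x_eq /rho_y /rho_z exprMn -!exprM !exprD; ring. Qed.

Lemma coef_rho_mono_lt a b c n :
  (n < 6 * a + 8 * b + 10 * c)%N -> (rho_mono a b c)`_n = 0.
Proof. by move=> h; rewrite rho_mono_eq coefMXn h. Qed.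

Lemma coef_exp_1addX25 a j : (j < 25)%N -> ((1 + 'X^25 : {poly k}) ^+ a)`_j = (j == 0)%:R.
Proof.
move=> hj; elim: a => [|a IH]; first by rewrite expr0 coef1.
by rewrite exprSr mulrDr mulr1 coefD coefMXn IH hj addr0.
Qed.

Lemma coef_rho_mono_small a b c n :
  (n < 25)%N -> (rho_mono a b c)`_n = (n == 6 * a + 8 * b + 10 * c)%:R.
Proof.
move=> h; rewrite rho_mono_eq coefMXn; case: ltnP => hw.
  by rewrite (_ : (n == _) = false) //; apply/eqP; lia.
rewrite coef_exp_1addX25; last lia.
by rewrite subn_eq0 eqn_leq hw andbT.
Qed.

Lemma rho_unique_weight f n a0 b0 c0 : (n < 25)%N ->
  (forall a b c, n = 6 * a + 8 * b + 10 * c <-> [/\ a = a0, b = b0 & c = c0])%N ->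
  rho f n = f a0 b0 c0.
Proof.
move=> hn hw; have w0 := (hw a0 b0 c0).2 (And3 erefl erefl erefl).
have [ha hb hc] : [/\ a0 < n.+1, b0 < n.+1 & c0 < n.+1]%N by split; lia.
have off a b c : (a != a0) || (b != b0) || (c != c0) -> (rho_mono a b c)`_n = 0.
  move=> hne; rewrite coef_rho_mono_small //; case: eqP => // e; move: hne.
  by have [-> -> ->] := (hw a b c).1 e; rewrite !eqxx.
rewrite /rho (big_ord_only (i0 := Ordinal ha)) => [|a hne]; last first.
  by rewrite big1 // => b _; rewrite big1 // => c _; rewrite off ?hne ?mulr0.
rewrite (big_ord_only (i0 := Ordinal hb)) => [|b hne]; last first.
  by rewrite big1 // => c _; rewrite off ?hne ?orbT ?mulr0.
rewrite (big_ord_only (i0 := Ordinal hc)) => [|c hne]; last by rewrite off ?hne ?orbT ?mulr0.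
by rewrite coef_rho_mono_small // (_ : (n == _) = true) ?mulr1 //; apply/eqP.
Qed.

Lemma coef_comp_rho_x_mul (p g : {poly k}) e n :
  ((p \Po rho_x k) * (g * 'X^e))`_n =
  \sum_(a < size p) p`_a * ((1 + 'X^25) ^+ a * g * 'X^(6 * a + e))`_n.
Proof.
rewrite comp_polyE mulr_suml coef_sum; apply: eq_bigr => a _.
have e_a : rho_x k ^+ a * (g * 'X^e) = (1 + 'X^25) ^+ a * g * 'X^(6 * a + e).
  by rewrite rho_x_eq exprMn -exprM exprD mulnC; ring.
by rewrite -scalerAl coefZ e_a.
Qed.

Lemma coef_comp_rho_x_mul_eq0 (p g : {poly k}) e m :
  (forall a, (6 * a + e <= m)%N -> p`_a = 0) -> ((p \Po rho_x k) * (g * 'X^e))`_m = 0.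
Proof.
move=> hp; rewrite coef_comp_rho_x_mul big1 // => a _.
case: (leqP (6 * a + e) m) => h; first by rewrite hp ?mul0r.
by rewrite coefMXn h mulr0.
Qed.

Lemma coef_comp_rho_x_mul_lead (p g : {poly k}) e o :
  (forall a, (a < o)%N -> p`_a = 0) -> g`_0 = 1 ->
  ((p \Po rho_x k) * (g * 'X^e))`_(6 * o + e) = p`_o.
Proof.
move=> hp hg; case: (ltnP o (size p)) => ho; last first.
  rewrite [RHS]nth_default // coef_comp_rho_x_mul_eq0 // => a ha.
  case: (ltnP a o) => h; first exact: hp.
  by rewrite nth_default //; apply: leq_trans ho h.
rewrite coef_comp_rho_x_mul (big_ord_only (i0 := Ordinal ho)) => [|a hne].
  by rewrite coefMXn ltnn subnn coef0M coef_exp_1addX25 // hg eqxx !mulr1.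
case: (ltngtP a o) => h; first by rewrite hp ?mul0r.
  by rewrite coefMXn ifT ?mulr0 //; lia.
by case/negP: hne; rewrite -val_eqE /= h.
Qed.

Definition rho_z_comm : commr_rmorph (polyC : k -> {poly k}) (rho_z k) :=
  fun _ => mulrC _ _.
Definition rho_y_comm : commr_rmorph (horner_morph rho_z_comm) (rho_y k) :=
  fun _ => mulrC _ _.
Definition rho_x_comm : commr_rmorph (horner_morph rho_y_comm) (rho_x k) :=
  fun _ => mulrC _ _.
(* rho_poly evaluates P in k[z][y][x] at x = rho_x, y = rho_y, z = rho_z. *)
Local Notation rho_poly := (horner_morph rho_x_comm).

Lemma coef_rho_poly P n :
  (rho_poly P)`_n = \sum_(a < n.+1) \sum_(b < n.+1) \sum_(c < n.+1)
                      P`_a`_b`_c * (rho_mono a b c)`_n.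
Proof.
have rx0 : (rho_x k)`_0 = 0 by rewrite /rho_x coefD !coefXn addr0.
have ry0 : (rho_y k)`_0 = 0 by rewrite /rho_y coefXn.
have rz0 : (rho_z k)`_0 = 0 by rewrite /rho_z coefXn.
rewrite -[rho_poly P]mul1r coef_mul_horner_morph //; apply: eq_bigr => a _.
rewrite coef_mul_horner_morph //; apply: eq_bigr => b _.
rewrite coef_mul_horner_morph //; apply: eq_bigr => c _.
by rewrite mulrC coefCM mul1r.
Qed.

Definition ps3_trunc N f : {poly {poly {poly k}}} :=
  \poly_(a < N.+1) \poly_(b < N.+1) \poly_(c < N.+1) f a b c.

Lemma coef_ps3_trunc N f a b c :
  (ps3_trunc N f)`_a`_b`_c =
  if [&& (a < N.+1)%N, (b < N.+1)%N & (c < N.+1)%N] then f a b c else 0.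
Proof.
rewrite /ps3_trunc coef_poly; case: (a < N.+1)%N; rewrite ?coef0 // coef_poly.
by case: (b < N.+1)%N; rewrite ?coef0 // coef_poly.
Qed.

Lemma rho_ps3_trunc N f n : (n <= N)%N -> rho f n = (rho_poly (ps3_trunc N f))`_n.
Proof.
move=> hn; rewrite coef_rho_poly; apply: eq_bigr => a _; apply: eq_bigr => b _.
apply: eq_bigr => c _; rewrite coef_ps3_trunc ifT //.
by apply/and3P; split; apply: leq_trans (ltn_ord _) _.
Qed.

Lemma ps3_mul_trunc N f g a b c :
  (a <= N)%N -> (b <= N)%N -> (c <= N)%N ->
  ps3_mul f g a b c = (ps3_trunc N f * ps3_trunc N g)`_a`_b`_c.
Proof.
move=> ha hb hc; rewrite coefM !coef_sum; apply: eq_bigr => i _.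
rewrite coefM !coef_sum; apply: eq_bigr => j _.
rewrite coefM; apply: eq_bigr => l _.
have := ltn_ord i; have := ltn_ord j; have := ltn_ord l => hl hj hi.
by rewrite !coef_ps3_trunc !ifT //; apply/and3P; split; lia.
Qed.

Lemma rho_mul_eq0 g h M0 n :
  (forall M, (M0 <= M)%N -> rho_poly (ps3_trunc M g) = 0) ->
  rho (ps3_mul h g) n = 0.
Proof.
move=> hg; pose M := maxn n M0; have hnM : (n <= M)%N := leq_maxl n M0.
have -> : rho (ps3_mul h g) n = (rho_poly (ps3_trunc M h * ps3_trunc M g))`_n.
  rewrite (rho_ps3_trunc _ hnM) !coef_rho_poly; apply: eq_bigr => a _.
  apply: eq_bigr => b _; apply: eq_bigr => c _.
  have := ltn_ord a; have := ltn_ord b; have := ltn_ord c => hc hb ha.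
  rewrite coef_ps3_trunc ifT; last by apply/and3P; split; lia.
  by rewrite (ps3_mul_trunc _ _ (N := M)) //; lia.
by rewrite rmorphM /= hg ?leq_maxr // mulr0 coef0.
Qed.

Lemma eq_rho f g n : (forall a b c, f a b c = g a b c) -> rho f n = rho g n.
Proof.
move=> h; apply: eq_bigr => a _; apply: eq_bigr => b _.
by apply: eq_bigr => c _; rewrite h.
Qed.

Lemma rho_add f g n : rho (ps3_add f g) n = rho f n + rho g n.
Proof.
rewrite /rho -big_split; apply: eq_bigr => a _.
rewrite -big_split; apply: eq_bigr => b _.
by rewrite -big_split; apply: eq_bigr => c _; rewrite mulrDl.
Qed.

Lemma rho_sum m (F : nat -> ps3 k) n :
  rho (fun a b c => \sum_(i < m) F i a b c) n = \sum_(i < m) rho (F i) n.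
Proof.
rewrite /rho; symmetry; rewrite exchange_big; apply: eq_bigr => a _.
rewrite exchange_big; apply: eq_bigr => b _.
by rewrite exchange_big; apply: eq_bigr => c _; rewrite mulr_suml.
Qed.

Definition poly3_mono a b c : {poly {poly {poly k}}} := (('X^c)%:P * 'X^b)%:P * 'X^a.

Lemma ps3_trunc_add N f g : ps3_trunc N (ps3_add f g) = ps3_trunc N f + ps3_trunc N g.
Proof.
apply/polyP => a; rewrite coefD; apply/polyP => b; rewrite coefD; apply/polyP => c.
by rewrite coefD !coef_ps3_trunc /ps3_add; case: ifP; rewrite ?addr0.
Qed.

Lemma ps3_trunc_mono N a0 b0 c0 : (a0 <= N)%N -> (b0 <= N)%N -> (c0 <= N)%N ->
  ps3_trunc N (ps3_mono k a0 b0 c0) = poly3_mono a0 b0 c0.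
Proof.
move=> ha hb hc; apply/polyP => a; apply/polyP => b; apply/polyP => c.
rewrite coef_ps3_trunc /ps3_mono /poly3_mono !(coefCM, coefXn, mulr_natr, coefMn).
case: (a =P a0) => [->|]; case: (b =P b0) => [->|]; case: (c =P c0) => [->|] //=;
  rewrite ?mulr0n ?if_same // ifT //; apply/and3P; split; lia.
Qed.

Lemma rho_poly_mono a b c : rho_poly (poly3_mono a b c) = rho_mono a b c.
Proof.
rewrite /poly3_mono rmorphM rmorphXn /= horner_morphX horner_morphC.
rewrite -[X in X * _]/(horner_morph rho_y_comm _) rmorphM rmorphXn /= horner_morphX.
rewrite horner_morphC -[X in X * _ * _]/(horner_morph rho_z_comm _) rmorphXn /=.
by rewrite horner_morphX /rho_mono; ring.
Qed.

End Evaluation.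

Section Division.
Variable k : fieldType.
Implicit Types f : ps3 k.

Definition ps3_reduced f := forall a b c, ~~ ((b < 3)%N && (c < 2)%N) -> f a b c = 0.

(* One step of division by the leading forms z^2 of g1 and y^3 of g2; the tails
   have higher order, so div_step raises the order by one. *)
Definition div_rem_step f : ps3 k :=
  fun a b c => if (b < 3)%N && (c < 2)%N then f a b c else 0.
Definition div_quo1_step f : ps3 k := fun a b c => f a b c.+2.
Definition div_quo2_step f : ps3 k := fun a b c => if (c < 2)%N then f a b.+3 c else 0.

Definition g1_tail : ps3 k := ps3_add (ps3_mono k 2 1 0) (ps3_mono k 0 5 3).
Definition g2_tail : ps3 k :=
  ps3_add (ps3_add (ps3_mono k 4 0 0) (ps3_mono k 0 3 5)) (ps3_mono k 2 4 3).

Definition div_step f : ps3 k := fun a b c =>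
  - (ps3_mul (div_quo1_step f) g1_tail a b c + ps3_mul (div_quo2_step f) g2_tail a b c).

Lemma div_stepE f a b c :
  f a b c = div_rem_step f a b c + ps3_mul (div_quo1_step f) (g1 k) a b c
            + ps3_mul (div_quo2_step f) (g2 k) a b c + div_step f a b c.
Proof.
have lead : f a b c = div_rem_step f a b c +
    ps3_mul (div_quo1_step f) (ps3_mono k 0 0 2) a b c +
    ps3_mul (div_quo2_step f) (ps3_mono k 0 3 0) a b c.
  rewrite !ps3_mul_monor /div_rem_step /div_quo1_step /div_quo2_step /= !subn0.
  by case: (ltnP b 3) => hb; case: (ltnP c 2) => hc /=; rewrite ?addr0 ?add0r //;
    f_equal; lia.
rewrite /div_step /g1 /g2 /g1_tail /g2_tail !ps3_mulDr {1}lead; ring.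
Qed.

Lemma ps3_ord_ge_div_step d f : ps3_ord_ge d f -> ps3_ord_ge d.+1 (div_step f).
Proof.
move=> hf.
have hq1 : ps3_ord_ge (d - 2) (div_quo1_step f) by move=> a b c h; apply: hf; lia.
have hq2 : ps3_ord_ge (d - 3) (div_quo2_step f).
  by move=> a b c h; rewrite /div_quo2_step hf ?if_same //; lia.
have ht1 : ps3_ord_ge 3 g1_tail.
  apply: ps3_ord_ge_add; first exact: (@ps3_ord_ge_mono k 2 1 0).
  exact: ps3_ord_geW (@ps3_ord_ge_mono k 0 5 3).
have ht2 : ps3_ord_ge 4 g2_tail.
  apply: ps3_ord_ge_add; first apply: ps3_ord_ge_add.
  - exact: (@ps3_ord_ge_mono k 4 0 0).
  - exact: ps3_ord_geW (@ps3_ord_ge_mono k 0 3 5).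
  - exact: ps3_ord_geW (@ps3_ord_ge_mono k 2 4 3).
have h1 := ps3_ord_ge_mul hq1 ht1; have h2 := ps3_ord_ge_mul hq2 ht2.
by move=> a b c h; rewrite /div_step h1 ?h2 ?addr0 ?oppr0 //; lia.
Qed.

Fixpoint div_iter f i : ps3 k :=
  if i is i'.+1 then div_step (div_iter f i') else f.

Lemma ps3_ord_ge_div_iter f i : ps3_ord_ge i (div_iter f i).
Proof.
by elim: i => [|i IH] /=; [move=> a b c; rewrite ltn0 | exact: ps3_ord_ge_div_step].
Qed.

Lemma div_iter_telescope f n a b c :
  f a b c = \sum_(i < n) (div_rem_step (div_iter f i) a b c
              + ps3_mul (div_quo1_step (div_iter f i)) (g1 k) a b c
              + ps3_mul (div_quo2_step (div_iter f i)) (g2 k) a b c)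
            + div_iter f n a b c.
Proof.
elim: n => [|n IH]; first by rewrite big_ord0 add0r.
by rewrite big_ord_recr /= IH -addrA -div_stepE.
Qed.

(* div_iter f i has order >= i, so only finitely many steps contribute to each
   coefficient: these sums are the coefficients of the limit remainder and quotients. *)
Definition div_rem f : ps3 k :=
  fun a b c => \sum_(i < a + b + c + 1) div_rem_step (div_iter f i) a b c.
Definition div_quo1 f : ps3 k :=
  fun a b c => \sum_(i < a + b + c + 3) div_quo1_step (div_iter f i) a b c.
Definition div_quo2 f : ps3 k :=
  fun a b c => \sum_(i < a + b + c + 4) div_quo2_step (div_iter f i) a b c.

Lemma ps3_division f a b c :
  f a b c = div_rem f a b c + ps3_mul (div_quo1 f) (g1 k) a b c
            + ps3_mul (div_quo2 f) (g2 k) a b c.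
Proof.
have vanish := ps3_ord_ge_div_iter f.
rewrite (div_iter_telescope f (a + b + c + 4)) vanish; last lia.
rewrite addr0 !big_split /=; congr (_ + _ + _).
- rewrite /div_rem (@big_ord_cut _ (fun i => div_rem_step (div_iter f i) a b c)
    (a + b + c + 1)) //; last lia.
  by move=> i hi; rewrite /div_rem_step vanish ?if_same //; lia.
- rewrite -(ps3_mul_suml (fun i => div_quo1_step (div_iter f i))).
  apply: eq_ps3_mul_low => i j l hi hj hl.
  rewrite /div_quo1 (@big_ord_cut _ (fun m => div_quo1_step (div_iter f m) i j l)
    (i + j + l + 3)) //; last lia.
  by move=> m hm; rewrite /div_quo1_step vanish //; lia.
- rewrite -(ps3_mul_suml (fun i => div_quo2_step (div_iter f i))).
  apply: eq_ps3_mul_low => i j l hi hj hl.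
  rewrite /div_quo2 (@big_ord_cut _ (fun m => div_quo2_step (div_iter f m) i j l)
    (i + j + l + 4)) //; last lia.
  by move=> m hm; rewrite /div_quo2_step vanish ?if_same //; lia.
Qed.

Lemma div_rem_reduced f : ps3_reduced (div_rem f).
Proof.
by move=> a b c h; rewrite /div_rem big1 // => i _; rewrite /div_rem_step (negbTE h).
Qed.

End Division.

Section CharTwo.
Variable k : fieldType.
Hypothesis hchar : (2%N \in [pchar k])%R.
Local Notation rho_poly := (horner_morph (@rho_x_comm k)).
Implicit Types f h : ps3 k.

Lemma natr2_poly_char2 : (2%:R : {poly k}) = 0.
Proof. by rewrite -polyC_natr (pcharf0 hchar). Qed.

Lemma rho_poly_g1 M : (5 <= M)%N -> rho_poly (ps3_trunc M (g1 k)) = 0.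
Proof.
move=> hM; rewrite /g1 !ps3_trunc_add !ps3_trunc_mono //; try lia.
rewrite !rmorphD /= !rho_poly_mono /rho_mono /rho_x /rho_y /rho_z.
transitivity (2%:R * ('X^20 + 'X^45 + 'X^70) : {poly k}); first ring.
by rewrite natr2_poly_char2 mul0r.
Qed.

Lemma rho_poly_g2 M : (5 <= M)%N -> rho_poly (ps3_trunc M (g2 k)) = 0.
Proof.
move=> hM; rewrite /g2 !ps3_trunc_add !ps3_trunc_mono //; try lia.
rewrite !rmorphD /= !rho_poly_mono /rho_mono /rho_x /rho_y /rho_z.
transitivity (2%:R * ('X^24 + 2%:R * 'X^49 + 4%:R * 'X^74 + 3%:R * 'X^99 + 'X^124)
  : {poly k}); first ring.
by rewrite natr2_poly_char2 mul0r.
Qed.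

Lemma rho_mul_g1 h n : rho (ps3_mul h (g1 k)) n = 0.
Proof. exact: rho_mul_eq0 rho_poly_g1. Qed.

Lemma rho_mul_g2 h n : rho (ps3_mul h (g2 k)) n = 0.
Proof. exact: rho_mul_eq0 rho_poly_g2. Qed.

Lemma kerP_g1 : kerP (g1 k).
Proof.
by move=> n; rewrite -(rho_mul_g1 (ps3_mono k 0 0 0) n); apply: eq_rho => a b c;
  rewrite ps3_mul_mono0l.
Qed.

Lemma kerP_g2 : kerP (g2 k).
Proof.
by move=> n; rewrite -(rho_mul_g2 (ps3_mono k 0 0 0) n); apply: eq_rho => a b c;
  rewrite ps3_mul_mono0l.
Qed.

Lemma kerP_in_ideal f : in_ideal [:: g1 k; g2 k] f -> kerP f.
Proof.
move=> [h hf] n; rewrite (eq_rho n hf).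
rewrite (rho_sum _ (fun i => ps3_mul (h i) (nth (ps3_zero k) [:: g1 k; g2 k] i))).
by rewrite !big_ord_recr big_ord0 /= rho_mul_g1 rho_mul_g2 !addr0.
Qed.

Lemma kerP_div_rem f : kerP f -> kerP (div_rem f).
Proof.
move=> hf n; rewrite -(hf n) (eq_rho n (ps3_division f)) !rho_add.
by rewrite rho_mul_g1 rho_mul_g2 !addr0.
Qed.

End CharTwo.

Section Remainder.
Variable k : fieldType.
Implicit Types r : ps3 k.

Definition rem_val (i : nat) : nat :=
  match i with 0 => 0 | 1 => 8 | 2 => 10 | 3 => 41 | 4 => 43 | _ => 51 end%N.

Definition rem_basis (i : nat) : {poly k} :=
  match i with
  | 0%N => 1
  | 1%N => rho_y k
  | 2%N => rho_z k
  | 3%N => rho_y k ^+ 2 + rho_x k * rho_z k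
  | 4%N => rho_y k * rho_z k + rho_x k ^+ 3
  | _ => rho_y k ^+ 2 * rho_z k + rho_x k ^+ 3 * rho_y k
  end.

Definition rem_unit (i : nat) : {poly k} :=
  match i with 4%N | 5%N => 1 + 'X^25 + 'X^50 | _ => 1 end.

(* A reduced r = sum_(b<3, c<2) r_bc(x) y^b z^c equals sum_i C_i(x) rem_basis i
   with C_0 = r_00 - x^3 r_11, C_1 = r_10 - x^3 r_21, C_2 = r_01 - x r_20,
   C_3 = r_20, C_4 = r_11, C_5 = r_21; rem_coord r i a is the coefficient of
   x^a in C_i, and rem_coord_poly its truncation. *)
Definition rem_coord r (i a : nat) : k :=
  let shift s b c := if (s <= a)%N then r (a - s)%N b c else 0 in
  match i with
  | 0%N => r a 0%N 0%N - shift 3%N 1%N 1%N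
  | 1%N => r a 1%N 0%N - shift 3%N 2%N 1%N
  | 2%N => r a 0%N 1%N - shift 1%N 2%N 0%N
  | 3%N => r a 2%N 0%N
  | 4%N => r a 1%N 1%N
  | _ => r a 2%N 1%N
  end.

Definition rem_slice r N b c : {poly k} := \poly_(a < N.+1) r a b c.

Definition rem_coord_poly r N (i : nat) : {poly k} :=
  match i with
  | 0%N => rem_slice r N 0%N 0%N - 'X^3 * rem_slice r N 1%N 1%N
  | 1%N => rem_slice r N 1%N 0%N - 'X^3 * rem_slice r N 2%N 1%N
  | 2%N => rem_slice r N 0%N 1%N - 'X * rem_slice r N 2%N 0%N
  | 3%N => rem_slice r N 2%N 0%N
  | 4%N => rem_slice r N 1%N 1%N
  | _ => rem_slice r N 2%N 1%N
  end.

Lemma coef_rem_coord_poly r N i a :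
  (a <= N)%N -> (rem_coord_poly r N i)`_a = rem_coord r i a.
Proof.
move=> h; have sl a' b c : (a' <= N)%N -> (rem_slice r N b c)`_a' = r a' b c.
  by move=> ?; rewrite coef_poly ltnS ifT.
case: i => [|[|[|[|[|i]]]]] /=; rewrite ?coefB ?coefXnM ?coefXM ?sl //; try lia.
- by case: ltnP.
- by case: ltnP.
- by case: (a) => [|a'] //=; rewrite subn1.
Qed.

Lemma coef0_rem_unit i : (rem_unit i)`_0 = 1.
Proof.
by case: i => [|[|[|[|[|[|i]]]]]]; rewrite /= ?coef1 // !coefD coef1 !coefXn !addr0.
Qed.

Lemma rem_val_inj i j a a' : (i < 6)%N -> (j < 6)%N ->
  (6 * a + rem_val i = 6 * a' + rem_val j)%N -> i = j.
Proof.
by case: i => [|[|[|[|[|[|i]]]]]] //; case: j => [|[|[|[|[|[|j]]]]]] //= _ _; lia.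
Qed.

Hypothesis hchar : (2%N \in [pchar k])%R.

(* In characteristic 2 the cross terms cancel: e.g. rho(y^2 + x z) = t^41. *)
Lemma rem_basis_eq i : (i < 6)%N -> rem_basis i = rem_unit i * 'X^(rem_val i).
Proof.
have two := natr2_poly_char2 hchar.
case: i => [|[|[|[|[|[|i]]]]]] //= _; rewrite /rho_x /rho_y /rho_z ?mul1r ?expr0 //.
- transitivity (2%:R * 'X^16 + 'X^41 : {poly k}); first ring.
  by rewrite two mul0r add0r.
- transitivity (2%:R * ('X^18 + 'X^43 + 'X^68) + (1 + 'X^25 + 'X^50) * 'X^43 : {poly k});
    first ring.
  by rewrite two mul0r add0r.
- transitivity (2%:R * ('X^26 + 'X^51 + 'X^76) + (1 + 'X^25 + 'X^50) * 'X^51 : {poly k});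
    first ring.
  by rewrite two mul0r add0r.
Qed.

Lemma rho_reduced_sum r m : ps3_reduced r ->
  rho r m = \sum_(b < 3) \sum_(c < 2) \sum_(a < m.+1) r a b c * (rho_mono k a b c)`_m.
Proof.
move=> hr.
have z a b c : ~~ ((b < 3)%N && (c < 2)%N) || (m < 6 * a + 8 * b + 10 * c)%N ->
    r a b c * (rho_mono k a b c)`_m = 0.
  by case/orP => [/hr -> | /coef_rho_mono_lt ->]; rewrite ?mul0r ?mulr0.
rewrite /rho exchange_big; under eq_bigr do rewrite exchange_big /=.
rewrite (@big_ord_cut_eq _ (fun b => \sum_(c < m.+1) \sum_(a < m.+1)
  r a b c * (rho_mono k a b c)`_m) (minn 3 m.+1) m.+1 3) ?geq_minl ?geq_minr //; last first.
  move=> b hb; rewrite big1 // => c _; rewrite big1 // => a _; apply: z.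
  by case: (leqP 3 b) => h; rewrite ?h //= orbC; apply/orP; left; lia.
apply: eq_bigr => b _.
rewrite (@big_ord_cut_eq _ (fun c => \sum_(a < m.+1) r a b c * (rho_mono k a b c)`_m)
  (minn 2 m.+1) m.+1 2) ?geq_minl ?geq_minr // => c hc.
rewrite big1 // => a _; apply: z.
by case: (leqP 2 c) => h; rewrite ?h ?andbF //= orbC; apply/orP; left; lia.
Qed.

Lemma rho_reduced r m : ps3_reduced r ->
  rho r m = (\sum_(i < 6) (rem_coord_poly r m i \Po rho_x k) * rem_basis i)`_m.
Proof.
move=> hr.
have -> : \sum_(i < 6) (rem_coord_poly r m i \Po rho_x k) * rem_basis i =
    \sum_(b < 3) \sum_(c < 2) (rem_slice r m b c \Po rho_x k) * rho_y k ^+ b * rho_z k ^+ c.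
  rewrite !big_ord_recr !big_ord0 /=.
  by rewrite !comp_polyB !comp_polyM comp_polyX; ring.
rewrite rho_reduced_sum // coef_sum; apply: eq_bigr => b _.
rewrite coef_sum; apply: eq_bigr => c _.
rewrite /rem_slice poly_def linear_sum /= !mulr_suml coef_sum; apply: eq_bigr => a _.
by rewrite comp_polyZ comp_Xn_poly -!scalerAl coefZ.
Qed.

Lemma rho_reduced_lowest r j b : ps3_reduced r -> (j < 6)%N ->
  (forall i a, (i < 6)%N -> (6 * a + rem_val i < 6 * b + rem_val j)%N ->
     rem_coord r i a = 0) ->
  rho r (6 * b + rem_val j) = rem_coord r j b.
Proof.
move=> hr hj hlow; rewrite rho_reduced // coef_sum.
rewrite (big_ord_only (i0 := Ordinal hj)) /= => [|i hne]; rewrite rem_basis_eq //.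
  rewrite coef_comp_rho_x_mul_lead ?coef0_rem_unit ?coef_rem_coord_poly //; try lia.
  by move=> a ha; rewrite coef_rem_coord_poly ?hlow //; lia.
rewrite coef_comp_rho_x_mul_eq0 // => a ha; rewrite coef_rem_coord_poly; last lia.
apply: hlow => //; rewrite ltn_neqAle ha andbT; apply/eqP => /rem_val_inj hij.
by case/eqP: hne; apply: val_inj; rewrite /= hij.
Qed.

Lemma reduced_kerP_coord r : ps3_reduced r -> kerP r ->
  forall i a, (i < 6)%N -> rem_coord r i a = 0.
Proof.
move=> hr hker i a hi.
suff low m : forall i a, (i < 6)%N -> (6 * a + rem_val i < m)%N -> rem_coord r i a = 0.
  exact: (low _ i a hi (ltnSn _)).
elim: m => // m IH i' a' hi'; rewrite ltnS leq_eqVlt => /orP [/eqP hm | ]; last exact: IH.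
by rewrite -(rho_reduced_lowest hr hi') ?hker // => i'' a'' hi''; rewrite hm; apply: IH.
Qed.

Lemma reduced_coord_eq0 r : ps3_reduced r ->
  (forall i a, (i < 6)%N -> rem_coord r i a = 0) -> forall a b c, r a b c = 0.
Proof.
move=> hr hz a b c.
case: (boolP ((b < 3)%N && (c < 2)%N)) => [/andP [hb hc] | /hr //].
have z i a' : (i < 6)%N -> rem_coord r i a' = 0 := hz i a'.
have z20 a' : r a' 2 0 = 0 := z 3%N a' isT.
have z11 a' : r a' 1 1 = 0 := z 4%N a' isT.
have z21 a' : r a' 2 1 = 0 := z 5%N a' isT.
move: (z 0%N a isT) (z 1%N a isT) (z 2%N a isT); rewrite /= z11 z21 z20 !if_same !subr0.
by case: b hb => [|[|[|b]]] // _; case: c hc => [|[|c]] // _ => ->.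
Qed.

Lemma reduced_kerP_eq0 r : ps3_reduced r -> kerP r -> forall a b c, r a b c = 0.
Proof. by move=> hr hker; apply: reduced_coord_eq0 => //; apply: reduced_kerP_coord. Qed.

End Remainder.

Section Generators.
Variable k : fieldType.
Hypothesis hchar : (2%N \in [pchar k])%R.
Implicit Types f : ps3 k.

Lemma generates_g1_g2 : generates [:: g1 k; g2 k] (@kerP k).
Proof.
move=> f; split; last exact: kerP_in_ideal.
move=> hf; have hr := reduced_kerP_eq0 hchar (div_rem_reduced f) (kerP_div_rem hchar hf).
exists (fun i => if i == 0%N then div_quo1 f else div_quo2 f) => a b c.
by rewrite !big_ord_recr big_ord0 /= add0r {1}(ps3_division f a b c) hr add0r.
Qed.

Lemma kerP_low_coef f :
  kerP f -> [/\ f 0%N 0%N 0%N = 0, f 0%N 1%N 0%N = 0 & f 0%N 0%N 1%N = 0].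
Proof.
have w n a0 b0 c0 : (n < 25)%N -> n = (6 * a0 + 8 * b0 + 10 * c0)%N ->
    (forall a b c, n = (6 * a + 8 * b + 10 * c)%N -> [/\ a = a0, b = b0 & c = c0]) ->
    kerP f -> f a0 b0 c0 = 0.
  move=> hn e hu hf; rewrite -(hf n) (@rho_unique_weight k f n a0 b0 c0) // => a b c.
  by split=> [/hu //|[-> -> ->]].
by move=> hf; split; [apply: (w 0%N) | apply: (w 8%N) | apply: (w 10%N)] => // a b c ?;
  split; lia.
Qed.

Lemma not_generates_nil : ~ generates [::] (@kerP k).
Proof.
move=> hgen; have [h] := (hgen _).1 (kerP_g1 hchar).
by move/(_ 0%N 0%N 2%N); rewrite big_ord0 /g1 /ps3_add /ps3_mono /= !addr0; apply/eqP/oner_neq0.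
Qed.

(* Comparing the coefficients of z^2, y^2 in g1 = h f and of z^2, y^3 in g2 = h' f,
   using that f has no constant or linear terms in y, z. *)
Lemma not_generates_single f : ~ generates [:: f] (@kerP k).
Proof.
move=> hgen.
have hf : kerP f.
  apply/(hgen f).2; exists (fun _ => ps3_mono k 0 0 0) => a b c.
  by rewrite big_ord1 ps3_mul_mono0l.
have [f000 f010 f001] := kerP_low_coef hf.
have [h hh] := (hgen _).1 (kerP_g1 hchar); have [h' hh'] := (hgen _).1 (kerP_g2 hchar).
move: (hh 0%N 0%N 2%N) (hh 0%N 2%N 0%N) (hh' 0%N 0%N 2%N) (hh' 0%N 3%N 0%N).
rewrite !big_ord1 /ps3_mul !big_ord_recr !big_ord0 /= f000 f010 f001.
rewrite /g1 /g2 /ps3_add /ps3_mono /= !(mulr0, addr0, add0r).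
rewrite !subn0 (_ : (3 - 1 = 2)%N) // => e1 e2 e3 e4.
have [h0 f002] : h 0%N 0%N 0%N 0%N != 0 /\ f 0%N 0%N 2%N != 0.
  by apply/andP; rewrite -negb_or -mulf_eq0 -e1 oner_neq0.
have f020 : f 0%N 2%N 0%N = 0.
  by move/esym/eqP: e2; rewrite mulf_eq0 (negbTE h0) => /eqP.
have h'0 : h' 0%N 0%N 0%N 0%N = 0.
  by move/esym/eqP: e3; rewrite mulf_eq0 (negbTE f002) orbF => /eqP.
by move: e4; rewrite h'0 f020 mul0r mulr0 addr0; apply/eqP/oner_neq0.
Qed.

End Generators.

Theorem mainTheorem6 (k : fieldType) (hchar : (2%N \in [pchar k])%R) :
  generates [:: g1 k; g2 k] (@kerP k) /\ min_num_gens (@kerP k) 2.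
Proof.
have gen := generates_g1_g2 hchar.
split=> //; split; first by exists [:: g1 k; g2 k].
move=> [|f [|f' gs]] hgen //.
- by case: (not_generates_nil hchar).
- by case: (not_generates_single hchar hgen).
Qed.
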